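(* For every $\mu>0$ and $\delta>0$, the function $\alpha\mapsto\sigma(\mu,\alpha,\delta)$ on $[0,+\infty)$ attains its maximum at a unique point $\alpha_m=\alpha_m(\mu,\delta)\ge 0$. Moreover $\alpha_m$ depends on $(\mu,\delta)$ only through $\beta=\mu\delta$, it is non-increasing as a function of $\beta$, and: (i) if $\mu\delta\ge 1/2$ then $\alpha_m=0$; (ii) $\alpha_m\to 1$ as $\mu\delta\to 0$. In particular $\alpha_m<1$ for all $\mu,\delta>0$.
   Context: For $\mu,\delta>0$ and $\alpha\ge 0$ define the steady state activity $a_\infty(\mu,\alpha,\delta):=\frac{1}{\delta+1/\mu}$ if $\alpha=0$, and for $\alpha>0$ \[a_\infty(\mu,\alpha,\delta):=\frac1\delta-\frac{1+\alpha+\mu\delta-\sqrt{\Delta(\mu,\alpha,\delta)}}{2\alpha\delta},\qquad \Delta(\mu,\alpha,\delta):=(1+\mu\delta-\alpha)^2+4\mu\alpha\delta\] (in all cases $a_\infty$ is the unique positive solution $a$ of $a\big(\delta+\frac1{\mu+\alpha a}\big)=1$; it is the stationary firing rate of the mean-field limit of age-dependent Hawkes processes with intensity $(\mu+x)\mathbf 1_{s\ge\delta}$, input $\mu$, refractory period $\delta$, mean connectivity $\alpha$). The stimulus sensitivity is $\sigma(\mu,\alpha,\delta):=\frac{\partial}{\partial\mu}a_\infty(\mu,\alpha,\delta)$; explicitly $\sigma=1/(1+\mu\delta)^2$ for $\alpha=0$ and $\sigma=-\frac1{2\alpha}+\frac{1+\mu\delta+\alpha}{2\alpha\sqrt{\Delta}}$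 for $\alpha>0$. The critical value of the connectivity is $\alpha_c=1$. *)

From Stdlib Require Import Reals Lra.
Open Scope R_scope.

Definition Delta (mu alpha delta : R) : R :=
  (1 + mu * delta - alpha) ^ 2 + 4 * mu * alpha * delta.

Definition a_inf (mu alpha delta : R) : R :=
  if Req_EM_T alpha 0 then 1 / (delta + 1 / mu)
  else 1 / delta - (1 + alpha + mu * delta - sqrt (Delta mu alpha delta)) / (2 * alpha * delta).

(* Stimulus sensitivity sigma = d a_inf / d mu, given by its explicit formula. *)
Definition sigma (mu alpha delta : R) : R :=
  if Req_EM_T alpha 0 then 1 / (1 + mu * delta) ^ 2
  else - (1 / (2 * alpha))
       + (1 + mu * delta + alpha) / (2 * alpha * sqrt (Delta mu alpha delta)).

Definition is_max_point (mu delta a : R) : Prop :=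
  0 <= a /\ forall alpha, 0 <= alpha -> sigma mu alpha delta <= sigma mu a delta.

From Pilot Require Import Defs.
From Stdlib Require Import Reals Lra Psatz.
Open Scope R_scope.

(* Write b = mu * delta.  The positive root p of p^2 + (alpha + b - 1) p = b
   lies in (0, 1] and is a decreasing reparametrisation of alpha in [0, +oo),
   alpha = (1 - p)(b + p)/p, in which sigma becomes p^2 / ((b + p^2)(b + p)).
   The logarithmic derivative of this function has the sign of
   2 b^2 + b p - p^3, so it increases up to the positive root m of
   p^3 - b p - 2 b^2 and decreases afterwards: the unique maximiser is
   alpha(min 1 m).  Parametrising m = x (1 + 2x), b = x^2 (1 + 2x) gives
   alpha_m = max 0 (1 - b - 2 x^2), and x is an increasing function of b with
   x >= 1/2 iff b >= 1/2 and x^2 <= b, whence (i), (ii) and monotonicity. *)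

Definition alpha_of (b p : R) : R := (1 - p) * (b + p) / p.

Definition sigma_of (b p : R) : R := p * p / ((b + p * p) * (b + p)).

Lemma alpha_of_ge0 b p : 0 < b -> 0 < p <= 1 -> 0 <= alpha_of b p.
Proof.
  intros hb hp. unfold alpha_of.
  apply Rmult_le_pos; [nra | left; apply Rinv_0_lt_compat; lra].
Qed.

Lemma alpha_of_onto b alpha : 0 < b -> 0 <= alpha ->
  exists p, 0 < p <= 1 /\ alpha = alpha_of b p.
Proof.
  intros hb ha.
  set (t := alpha + b - 1).
  set (r := sqrt (t * t + 4 * b)).
  assert (hr2 : r * r = t * t + 4 * b) by (apply sqrt_sqrt; nra).
  assert (hr0 : 0 <= r) by apply sqrt_pos.
  assert (hrt : Rabs t < r).
  { apply Rsqr_incrst_0; [| apply Rabs_pos | lra].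
    rewrite <- Rsqr_abs. unfold Rsqr. lra. }
  assert (hrt2 : r <= t + 2).
  { apply Rsqr_incr_0_var; [| unfold t; lra]. unfold Rsqr, t in *. nra. }
  set (p := (r - t) / 2).
  assert (hp : 0 < p <= 1).
  { unfold p. split; [| lra]. pose proof (Rle_abs t). lra. }
  exists p. split; [exact hp |].
  assert (hroot : p * p + t * p = b) by (unfold p; nra).
  unfold alpha_of. apply (Rmult_eq_reg_r p); [| lra].
  field_simplify; [| lra]. unfold t in hroot. nra.
Qed.

Lemma Delta_alpha_of mu delta p : 0 < p ->
  Defs.Delta mu (alpha_of (mu * delta) p) delta = ((mu * delta) / p + p) ^ 2.
Proof. intros hp. unfold Defs.Delta, alpha_of. field. lra. Qed.

Lemma alpha_of_eq0 b p : 0 < b -> 0 < p -> alpha_of b p = 0 -> p = 1.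
Proof.
  intros hb hp h0. unfold alpha_of in h0.
  assert (hzero : (1 - p) * (b + p) = 0).
  { apply (Rmult_eq_reg_r (/ p)); [| apply Rinv_neq_0_compat; lra]. lra. }
  destruct (Rmult_integral _ _ hzero); lra.
Qed.

(* [Reals] exports unrelated [sigma] and [Delta], hence the qualified names. *)
Lemma sigma_alpha_of mu delta p : 0 < mu -> 0 < delta -> 0 < p <= 1 ->
  Defs.sigma mu (alpha_of (mu * delta) p) delta = sigma_of (mu * delta) p.
Proof.
  intros hm hd hp.
  assert (hb : 0 < mu * delta) by nra.
  unfold Defs.sigma. destruct (Req_EM_T (alpha_of (mu * delta) p) 0) as [h0 | h0].
  - rewrite (alpha_of_eq0 (mu * delta) p hb ltac:(lra) h0).
    unfold sigma_of. field. lra.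
  - assert (hp1 : p < 1).
    { destruct (Req_dec p 1) as [-> |]; [| lra].
      exfalso. apply h0. unfold alpha_of. field. }
    assert (hpos : 0 <= mu * delta / p + p)
      by (apply Rplus_le_le_0_compat; [apply Rlt_le, Rdiv_lt_0_compat |]; lra).
    rewrite Delta_alpha_of, sqrt_pow2 by lra. clear hpos h0.
    unfold alpha_of, sigma_of. field. repeat split; nra.
Qed.

(* p^3 - b p - 2 b^2 is, up to a negative factor, the numerator of the
   derivative of [sigma_of b]. *)
Definition crit_poly (b m : R) : R := m * m * m - b * m - 2 * (b * b).

Lemma sigma_of_sub b m p : 0 < b -> 0 < m -> 0 < p ->
  sigma_of b m - sigma_of b p =
  ((m - p) * (m - p) * (b * b + m * m * p) - p * ((m - p) * crit_poly b m))
    / ((b + m * m) * (b + m) * (b + p * p) * (b + p)).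
Proof. intros hb hm hp. unfold sigma_of, crit_poly. field. repeat split; nra. Qed.

Lemma sigma_of_lt b m p : 0 < b -> 0 < m -> 0 < p -> p <> m ->
  (m - p) * crit_poly b m <= 0 -> sigma_of b p < sigma_of b m.
Proof.
  intros hb hm hp hpm hcrit.
  assert (hsq : 0 < (m - p) * (m - p)) by (assert (m - p <> 0) by lra; nra).
  assert (0 < sigma_of b m - sigma_of b p); [| lra].
  rewrite sigma_of_sub by lra.
  apply Rdiv_lt_0_compat.
  - assert (0 < (m - p) * (m - p) * (b * b + m * m * p))
      by (apply Rmult_lt_0_compat; [lra | nra]).
    nra.
  - repeat apply Rmult_lt_0_compat; nra.
Qed.

Definition cubic (x : R) : R := x * x + 2 * (x * x * x).

Lemma cubic_shift_continuous c : continuity (fun x => cubic x - c).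
Proof.
  apply continuity_minus; [| apply continuity_const; intros ? ?; reflexivity].
  unfold cubic. reg.
Qed.

Lemma cubic_shift_bracket c : 0 <= c ->
  (cubic 0 - c) * (cubic (c + 1) - c) <= 0.
Proof. intros hc. unfold cubic. nra. Qed.

(* A root of [cubic x = |b|] in [0, |b| + 1]; only [b >= 0] matters. *)
Definition cubic_inv (b : R) : R :=
  proj1_sig (IVT_cor (fun x => cubic x - Rabs b) 0 (Rabs b + 1)
    (cubic_shift_continuous (Rabs b))
    (Rlt_le _ _ (Rle_lt_0_plus_1 _ (Rabs_pos b)))
    (cubic_shift_bracket _ (Rabs_pos b))).

Lemma cubic_invP b : 0 <= b -> 0 <= cubic_inv b /\ cubic (cubic_inv b) = b.
Proof.
  intros hb. unfold cubic_inv.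
  destruct (IVT_cor _ _ _ _ _ _) as [x [hx e]]; simpl.
  rewrite Rabs_pos_eq in e by exact hb. split; lra.
Qed.

Lemma cubic_inv_gt0 b : 0 < b -> 0 < cubic_inv b.
Proof.
  intros hb. destruct (cubic_invP b) as [hx e]; [lra |].
  destruct hx as [| h]; [assumption |].
  rewrite <- h in e. unfold cubic in e. lra.
Qed.

Lemma cubic_lt x y : 0 <= x -> x < y -> cubic x < cubic y.
Proof.
  intros hx hxy. unfold cubic.
  assert (x * x < y * y) by nra. assert (x * x * x < y * y * y) by nra. lra.
Qed.

Lemma cubic_inv_le b1 b2 : 0 <= b1 -> b1 <= b2 -> cubic_inv b1 <= cubic_inv b2.
Proof.
  intros h1 h12.
  destruct (cubic_invP b1 h1) as [x1 e1], (cubic_invP b2 ltac:(lra)) as [x2 e2].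
  apply Rnot_lt_le. intros hlt. pose proof (cubic_lt _ _ x2 hlt). lra.
Qed.

Lemma cubic_inv_ge_half b : 1 / 2 <= b -> 1 / 2 <= cubic_inv b.
Proof.
  intros hb. destruct (cubic_invP b) as [hx e]; [lra |].
  apply Rnot_lt_le. intros hlt. pose proof (cubic_lt _ _ hx hlt).
  unfold cubic in *. lra.
Qed.

Lemma sqr_cubic_inv_le b : 0 <= b -> cubic_inv b * cubic_inv b <= b.
Proof. intros hb. destruct (cubic_invP b hb) as [hx e]. unfold cubic in e. nra. Qed.

(* b = cubic_inv b * crit b, which makes crit b a root of [crit_poly b]. *)
Definition crit (b : R) : R := cubic_inv b * (1 + 2 * cubic_inv b).

Lemma crit_polyE b : 0 <= b -> crit_poly b (crit b) = 0.
Proof.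
  intros hb. destruct (cubic_invP b hb) as [_ e].
  unfold crit_poly, crit, cubic in *. set (x := cubic_inv b) in *.
  clearbody x. subst b. ring.
Qed.

Lemma half_le_of_crit_ge1 b : 0 <= b -> 1 <= crit b -> 1 / 2 <= b.
Proof.
  intros hb h. destruct (cubic_invP b hb) as [hx e].
  unfold crit in h. unfold cubic in e. set (x := cubic_inv b) in *.
  assert (1 / 2 <= x) by nra. nra.
Qed.

Definition p_max (b : R) : R := Rmin 1 (crit b).

Lemma p_max_range b : 0 < b -> 0 < p_max b <= 1.
Proof.
  intros hb. pose proof (cubic_inv_gt0 b hb).
  unfold p_max, crit. split; [apply Rmin_glb_lt; nra | apply Rmin_l].
Qed.

Lemma sigma_of_lt_p_max b p : 0 < b -> 0 < p <= 1 -> p <> p_max b ->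
  sigma_of b p < sigma_of b (p_max b).
Proof.
  intros hb hp hne. pose proof (p_max_range b hb).
  apply sigma_of_lt; try lra.
  unfold p_max. destruct (Rle_lt_dec 1 (crit b)) as [h | h].
  - rewrite Rmin_left in * by exact h.
    pose proof (half_le_of_crit_ge1 b ltac:(lra) h).
    rewrite <- (Rmult_0_r (1 - p)). apply Rmult_le_compat_l; [lra |].
    unfold crit_poly. nra.
  - rewrite Rmin_right by lra. rewrite crit_polyE by lra. lra.
Qed.

Lemma alpha_of_p_max b : 0 < b ->
  alpha_of b (p_max b) = Rmax 0 (1 - b - 2 * (cubic_inv b * cubic_inv b)).
Proof.
  intros hb. pose proof (cubic_inv_gt0 b hb) as hx.
  destruct (cubic_invP b) as [_ e]; [lra |]. unfold cubic in e.
  unfold p_max, crit. set (x := cubic_inv b) in *.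
  destruct (Rle_lt_dec 1 (x * (1 + 2 * x))) as [h | h].
  - rewrite Rmin_left, Rmax_left by nra.
    unfold alpha_of. field.
  - rewrite Rmin_right, Rmax_right by nra.
    clearbody x. subst b. unfold alpha_of. field. lra.
Qed.

Definition alpha_max (b : R) : R := alpha_of b (p_max b).

Lemma sigma_lt_alpha_max mu delta alpha : 0 < mu -> 0 < delta -> 0 <= alpha ->
  alpha <> alpha_max (mu * delta) ->
  Defs.sigma mu alpha delta < Defs.sigma mu (alpha_max (mu * delta)) delta.
Proof.
  intros hm hd ha hne.
  assert (hb : 0 < mu * delta) by nra.
  destruct (alpha_of_onto _ _ hb ha) as [p [hp ->]].
  unfold alpha_max in *.
  rewrite !sigma_alpha_of by (try apply p_max_range; assumption).
  apply sigma_of_lt_p_max; [assumption | assumption |].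
  intros ->. exact (hne eq_refl).
Qed.

Lemma alpha_max_unique_max mu delta : 0 < mu -> 0 < delta ->
  is_max_point mu delta (alpha_max (mu * delta)) /\
  (forall a, is_max_point mu delta a -> a = alpha_max (mu * delta)).
Proof.
  intros hm hd.
  assert (hb : 0 < mu * delta) by nra.
  assert (h0 : 0 <= alpha_max (mu * delta))
    by (apply alpha_of_ge0, p_max_range; assumption).
  split.
  - split; [exact h0 |]. intros alpha ha.
    destruct (Req_dec alpha (alpha_max (mu * delta))) as [-> | hne]; [lra |].
    left. apply sigma_lt_alpha_max; assumption.
  - intros a [ha hmax].
    destruct (Req_dec a (alpha_max (mu * delta))) as [| hne]; [assumption |].
    pose proof (sigma_lt_alpha_max mu delta a hm hd ha hne).
    pose proof (hmax _ h0). lra.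
Qed.

Lemma alpha_max_le b1 b2 : 0 < b1 -> b1 <= b2 -> alpha_max b2 <= alpha_max b1.
Proof.
  intros h1 h12. unfold alpha_max.
  rewrite !alpha_of_p_max by lra.
  pose proof (cubic_inv_le b1 b2 ltac:(lra) h12).
  pose proof (cubic_inv_gt0 b1 h1).
  apply Rle_max_compat_l. nra.
Qed.

Lemma alpha_max_eq0 b : 1 / 2 <= b -> alpha_max b = 0.
Proof.
  intros hb. unfold alpha_max. rewrite alpha_of_p_max by lra.
  pose proof (cubic_inv_ge_half b hb). apply Rmax_left. nra.
Qed.

Lemma alpha_max_dist1 b : 0 < b -> Rabs (alpha_max b - 1) <= 3 * b.
Proof.
  intros hb. unfold alpha_max. rewrite alpha_of_p_max by lra.
  pose proof (sqr_cubic_inv_le b ltac:(lra)).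
  unfold Rmax. destruct (Rle_dec _ _); rewrite Rabs_left1; nra.
Qed.

Lemma alpha_max_lt1 b : 0 < b -> alpha_max b < 1.
Proof.
  intros hb. unfold alpha_max. rewrite alpha_of_p_max by lra.
  pose proof (Rle_0_sqr (cubic_inv b)). unfold Rsqr in *.
  apply Rmax_lub_lt; lra.
Qed.

Theorem theorem1 :
  exists am : R -> R,
    (* for all mu, delta > 0, am (mu*delta) is the unique maximizer on [0,oo) *)
    (forall mu delta, 0 < mu -> 0 < delta ->
       is_max_point mu delta (am (mu * delta)) /\
       (forall a, is_max_point mu delta a -> a = am (mu * delta))) /\
    (* non-increasing in beta on (0,oo) *)
    (forall b1 b2, 0 < b1 -> b1 <= b2 -> am b2 <= am b1) /\
    (* (i) *)
    (forall mu delta, 0 < mu -> 0 < delta -> mu * delta >= 1 / 2 ->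
       am (mu * delta) = 0) /\
    (* (ii) am -> 1 as mu*delta -> 0 *)
    (forall eps, 0 < eps -> exists eta, 0 < eta /\
       forall mu delta, 0 < mu -> 0 < delta -> mu * delta < eta ->
         Rabs (am (mu * delta) - 1) < eps) /\
    (* in particular *)
    (forall mu delta, 0 < mu -> 0 < delta -> am (mu * delta) < 1).
Proof.
  exists alpha_max. split; [| split; [| split; [| split]]].
  - apply alpha_max_unique_max.
  - apply alpha_max_le.
  - intros mu delta _ _ hb. apply alpha_max_eq0. lra.
  - intros eps heps. exists (eps / 3). split; [lra |].
    intros mu delta hm hd hb.
    pose proof (alpha_max_dist1 (mu * delta) ltac:(nra)). lra.
  - intros mu delta hm hd. apply alpha_max_lt1. nra.
Qed.
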